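(* Let $W \in \mathbb{R}^{m \times n}$ have full rank, $\mathrm{rank}(W) = \min(m,n)$. For a parameterized map $\theta \mapsto f_\theta(W) \in \mathbb{R}^{m\times n}$ define its rank capacity $$\mathcal{R}(f_\theta; W) = \max_\theta \mathrm{rank}(f_\theta(W)) - \min_\theta \mathrm{rank}(f_\theta(W)).$$ (Column-sliced form.) Suppose $n = n_0 n_1$ and write $W = [W_1, \dots, W_{n_1}]$ with $W_i \in \mathbb{R}^{m \times n_0}$. For each $i$ let $W_i = P_i Q_i$ be a full-rank factorization with $P_i \in \mathbb{R}^{m \times r_c}$, $Q_i \in \mathbb{R}^{r_c \times n_0}$, $r_c = \min(m, n_0)$. Keep the $P_i$ fixed, let $\theta = (\widetilde Q_1, \dots, \widetilde Q_{n_1})$ range over all tuples of arbitrary matrices $\widetilde Q_i \in \mathbb{R}^{r_c \times n_0}$, and set $f_\theta(W) = [P_1 \widetilde Q_1, \dots, P_{n_1}\widetilde Q_{n_1}]$. Then $\mathcal{R}(f_\theta; W) = \mathrm{rank}([P_1, \dots, P_{n_1}])$. In particular, if $m \le n$ then $\mathcal{R}(f_\theta; W) = m$. (Row-sliced form.) Suppose $m = m_0 m_1$ and write $W$ as the vertical stack of blocks $W_1, \dots, W_{m_1}$ with $W_j \in \mathbb{R}^{m_0 \times n}$. For each $j$ let $W_j = U_j V_j$ be a full-rank factorization with $U_j \in \mathbb{R}^{m_0 \times r_r}$, $V_j \in \mathbb{R}^{r_r \times n}$, $r_r = \min(m_0, n)$. Keep the $V_j$ fixed, let $\phi = (\widetilde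 U_1,\dots,\widetilde U_{m_1})$ range over all tuples of arbitrary matrices $\widetilde U_j \in \mathbb{R}^{m_0 \times r_r}$, and let $g_\phi(W)$ be the vertical stack of $\widetilde U_1 V_1, \dots, \widetilde U_{m_1} V_{m_1}$. Then $\mathcal{R}(g_\phi; W) = \mathrm{rank}([V_1^\top, \dots, V_{m_1}^\top])$. In particular, if $n \le m$ then $\mathcal{R}(g_\phi; W) = n$.
   Context: A full-rank factorization $A = PQ$ of an $a\times b$ matrix with inner dimension $r=\min(a,b)$ is any such product factorization (e.g. obtained from an SVD); $[A_1,\dots,A_s]$ denotes horizontal concatenation. *)

From HB Require Import structures.
From mathcomp Require Import all_boot all_order all_algebra.
Set Implicit Arguments. Unset Strict Implicit. Unset Printing Implicit Defensive.
Import Order.TTheory GRing.Theory Num.Theory.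
Local Open Scope ring_scope.

Definition rank_capacity_is {R : fieldType} {T : Type} {m n : nat}
  (f : T -> 'M[R]_(m, n)) (c : nat) : Prop :=
  exists tmax tmin : T,
    (forall t, (\rank (f t) <= \rank (f tmax))%N) /\
    (forall t, (\rank (f tmin) <= \rank (f t))%N) /\
    c = (\rank (f tmax) - \rank (f tmin))%N.

Lemma sum_const_ordE (k l : nat) : (k * l)%N = (\sum_(i < l) k)%N.
Proof. by rewrite big_const_ord iter_addn_0 mulnC. Qed.

Definition colslice {R : Type} {m n0 n1 : nat} (W : 'M[R]_(m, n0 * n1))
  (i : 'I_n1) : 'M[R]_(m, n0) :=
  @submxrow R n1 (fun _ => n0) m (castmx (erefl m, sum_const_ordE n0 n1) W) i.

Definition colcat {R : Type} {m n0 n1 : nat} (B : 'I_n1 -> 'M[R]_(m, n0))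
  : 'M[R]_(m, n0 * n1) :=
  castmx (erefl m, esym (sum_const_ordE n0 n1)) (@mxrow R n1 (fun _ => n0) m B).

Definition rowslice {R : Type} {m0 m1 n : nat} (W : 'M[R]_(m0 * m1, n))
  (j : 'I_m1) : 'M[R]_(m0, n) :=
  @submxcol R m1 (fun _ => m0) n (castmx (sum_const_ordE m0 m1, erefl n) W) j.

Definition rowcat {R : Type} {m0 m1 n : nat} (B : 'I_m1 -> 'M[R]_(m0, n))
  : 'M[R]_(m0 * m1, n) :=
  castmx (esym (sum_const_ordE m0 m1), erefl n) (@mxcol R m1 (fun _ => m0) n B).

From HB Require Import structures.
From mathcomp Require Import all_boot all_order all_algebra.
Import Order.TTheory GRing.Theory Num.Theory.
Set Implicit Arguments. Unset Strict Implicit. Unset Printing Implicit Defensive.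
Local Open Scope ring_scope.

(* f_theta(W) = [P_1, ..., P_n1] * diag(Q~_1, ..., Q~_n1), so its rank is at
   most rank [P_1, ..., P_n1].  Since r_c <= n0, the choice Q~_i = [I 0] can be
   undone on the right, so the bound is attained, while Q~_i = 0 gives rank 0.
   As W = f_(Q_1, ..., Q_n1)(W), full row rank of W forces full row rank of
   [P_1, ..., P_n1].  The row-sliced form is the column-sliced one for the
   transposes. *)

Section Blocks.
Variable F : fieldType.

Lemma mxrank_castmx m1 n1 m2 n2 (e : (m1 = m2) * (n1 = n2)) (A : 'M[F]_(m1, n1)) :
  \rank (castmx e A) = \rank A.
Proof. by case: e A => e1 e2; case: m2 / e1; case: n2 / e2 => A; rewrite castmx_id. Qed.

Lemma mxrow_mul_blockdiag m r n0 n1 (P : 'I_n1 -> 'M[F]_(m, r))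
    (Q : 'I_n1 -> 'M[F]_(r, n0)) :
  \mxrow_(i < n1) (P i *m Q i) =
  \mxrow_(i < n1) P i *m \mxblock_(i < n1, j < n1) (if i == j then Q i else 0).
Proof.
rewrite mul_mxrow_mxblock; apply/eq_mxrow => j.
by rewrite (bigD1 j) //= eqxx big1 ?addr0 // => i /negbTE ->; rewrite mulmx0.
Qed.

Lemma mxrank_mxrow_mul m r n0 n1 (P : 'I_n1 -> 'M[F]_(m, r))
    (Q : 'I_n1 -> 'M[F]_(r, n0)) :
  (\rank (\mxrow_(i < n1) (P i *m Q i)) <= \rank (\mxrow_(i < n1) P i))%N.
Proof. by rewrite mxrow_mul_blockdiag mxrankM_maxl. Qed.

Lemma mxrank_mxrow_mul_pid m r n0 n1 (P : 'I_n1 -> 'M[F]_(m, r)) :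
  (r <= n0)%N ->
  \rank (\mxrow_(i < n1) (P i *m pid_mx r : 'M_(m, n0))) = \rank (\mxrow_(i < n1) P i).
Proof.
move=> le_r_n0; apply/eqP; rewrite eqn_leq mxrank_mxrow_mul /=.
have P_pidK i : P i *m (pid_mx r : 'M_(r, n0)) *m (pid_mx r : 'M_(n0, r)) = P i.
  by rewrite -mulmxA mul_pid_mx !minnn (minn_idPr le_r_n0) pid_mx_1 mulmx1.
rewrite -[X in (\rank X <= _)%N](eq_mxrow P_pidK).
exact: mxrank_mxrow_mul.
Qed.

Lemma mxrank_mxrow_mul_full m r n0 n1 (P : 'I_n1 -> 'M[F]_(m, r))
    (Q : 'I_n1 -> 'M[F]_(r, n0)) :
  \rank (\mxrow_(i < n1) (P i *m Q i)) = m -> \rank (\mxrow_(i < n1) P i) = m.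
Proof.
move=> rPQ; apply/eqP; rewrite eqn_leq rank_leq_row -{1}rPQ.
exact: mxrank_mxrow_mul.
Qed.

Lemma colsliceK m n0 n1 (W : 'M[F]_(m, n0 * n1)) : colcat (colslice W) = W.
Proof. by rewrite /colcat /colslice submxrowK castmx_comp castmx_id. Qed.

Lemma eq_colcat m n0 n1 (B C : 'I_n1 -> 'M[F]_(m, n0)) :
  (forall i, B i = C i) -> colcat B = colcat C.
Proof. by move=> eqBC; rewrite /colcat (eq_mxrow eqBC). Qed.

Lemma mxrank_colcat m n0 n1 (B : 'I_n1 -> 'M[F]_(m, n0)) :
  \rank (colcat B) = \rank (\mxrow_(i < n1) B i).
Proof. exact: mxrank_castmx. Qed.

Lemma rowsliceK m0 m1 n (W : 'M[F]_(m0 * m1, n)) : rowcat (rowslice W) = W.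
Proof. by rewrite /rowcat /rowslice submxcolK castmx_comp castmx_id. Qed.

Lemma eq_rowcat m0 m1 n (B C : 'I_m1 -> 'M[F]_(m0, n)) :
  (forall j, B j = C j) -> rowcat B = rowcat C.
Proof. by move=> eqBC; rewrite /rowcat (eq_mxcol eqBC). Qed.

Lemma mxrank_rowcat_mul m0 m1 r n (U : 'I_m1 -> 'M[F]_(m0, r))
    (V : 'I_m1 -> 'M[F]_(r, n)) :
  \rank (rowcat (fun j => U j *m V j)) =
  \rank (\mxrow_(j < m1) ((V j)^T *m (U j)^T)).
Proof.
rewrite mxrank_castmx -mxrank_tr tr_mxcol.
by congr (\rank _); apply/eq_mxrow => j; rewrite trmx_mul.
Qed.

Lemma rank_capacity_is_bounded (T : Type) m n (f : T -> 'M[F]_(m, n)) c tmax tmin :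
  (forall t, (\rank (f t) <= c)%N) -> \rank (f tmax) = c -> f tmin = 0 ->
  rank_capacity_is f c.
Proof.
move=> le_c rmax f0; exists tmax, tmin; rewrite rmax f0 mxrank0 subn0.
by split=> // t; rewrite rmax.
Qed.

Lemma rank_capacity_colcat_mul m r n0 n1 (P : 'I_n1 -> 'M[F]_(m, r)) :
  (r <= n0)%N ->
  rank_capacity_is (fun Qt : 'I_n1 -> 'M[F]_(r, n0) => colcat (fun i => P i *m Qt i))
    (\rank (\mxrow_(i < n1) P i)).
Proof.
move=> le_r_n0; apply: (rank_capacity_is_bounded (tmax := fun _ => pid_mx r) (tmin := fun _ => 0))
  => [Qt||].
- by rewrite mxrank_colcat mxrank_mxrow_mul.
- by rewrite mxrank_colcat mxrank_mxrow_mul_pid.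
- by rewrite (eq_colcat (fun i => mulmx0 _ (P i))) /colcat mxrow0 castmx_const.
Qed.

Lemma rank_capacity_rowcat_mul m0 m1 r n (V : 'I_m1 -> 'M[F]_(r, n)) :
  (r <= m0)%N ->
  rank_capacity_is (fun Ut : 'I_m1 -> 'M[F]_(m0, r) => rowcat (fun j => Ut j *m V j))
    (\rank (\mxrow_(j < m1) (V j)^T)).
Proof.
move=> le_r_m0; apply: (rank_capacity_is_bounded (tmax := fun _ => (pid_mx r)^T) (tmin := fun _ => 0))
  => [Ut||].
- by rewrite mxrank_rowcat_mul mxrank_mxrow_mul.
- rewrite mxrank_rowcat_mul -(mxrank_mxrow_mul_pid _ le_r_m0).
  by congr (\rank _); apply/eq_mxrow => j; rewrite trmxK.
- by rewrite (eq_rowcat (fun j => mul0mx _ (V j))) /rowcat mxcol0 castmx_const.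
Qed.

End Blocks.

Theorem lemma2 (R : realFieldType) :
  (* Column-sliced form: n = n0 * n1. *)
  (forall (m n0 n1 : nat) (W : 'M[R]_(m, n0 * n1))
          (P : 'I_n1 -> 'M[R]_(m, minn m n0))
          (Q : 'I_n1 -> 'M[R]_(minn m n0, n0)),
      \rank W = minn m (n0 * n1) ->
      (forall i, colslice W i = P i *m Q i) ->
      let f := fun Qt : 'I_n1 -> 'M[R]_(minn m n0, n0) =>
                 colcat (fun i => P i *m Qt i) in
      rank_capacity_is f (\rank (\mxrow_(i < n1) P i)) /\
      ((m <= n0 * n1)%N -> rank_capacity_is f m)) /\
  (* Row-sliced form: m = m0 * m1. *)
  (forall (m0 m1 n : nat) (W : 'M[R]_(m0 * m1, n))
          (V : 'I_m1 -> 'M[R]_(minn m0 n, n))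
          (U : 'I_m1 -> 'M[R]_(m0, minn m0 n)),
      \rank W = minn (m0 * m1) n ->
      (forall j, rowslice W j = U j *m V j) ->
      let g := fun Ut : 'I_m1 -> 'M[R]_(m0, minn m0 n) =>
                 rowcat (fun j => Ut j *m V j) in
      rank_capacity_is g (\rank (\mxrow_(j < m1) (V j)^T)) /\
      ((n <= m0 * m1)%N -> rank_capacity_is g n)).
Proof.
split=> [m n0 n1 W P Q rW sliceW f | m0 m1 n W V U rW sliceW g].
  have capP := rank_capacity_colcat_mul P (geq_minr m n0).
  split=> // le_m; suff rP : \rank (\mxrow_(i < n1) P i) = m by rewrite rP in capP.
  apply: (mxrank_mxrow_mul_full (Q := Q)).
  by rewrite -mxrank_colcat -(eq_colcat sliceW) colsliceK rW (minn_idPl le_m).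
have capV := rank_capacity_rowcat_mul V (geq_minl m0 n).
split=> // le_n; suff rV : \rank (\mxrow_(j < m1) (V j)^T) = n by rewrite rV in capV.
apply: (mxrank_mxrow_mul_full (Q := fun j => (U j)^T)).
by rewrite -mxrank_rowcat_mul -(eq_rowcat sliceW) rowsliceK rW (minn_idPr le_n).
Qed.
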